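(* Let $\mathcal{X}$ have exactly two elements, so that $\mathscr{V}=\mathbb{R}^2$ with the componentwise order. For every $A\in\mathscr{Q}$ there is an option set $B\subseteq A$ with at most two elements such that $\{A\}$ is equivalent to $\{B\}$. Moreover, such a $B$ can be obtained from $A$ by finitely many successive removal steps, each of which replaces the current set $A'$ by $A'\setminus\{u\}$ for some $u\in A'$ for which there exist $v\in A'$ with $v\neq u$ and a real $\mu\ge0$ such that $u\le\mu v$.
   Context: Let $\mathscr{V}$ be a real vector space of functions $\mathcal X\to\mathbb{R}$ with pointwise operations; for $u,v\in\mathscr{V}$, $u\le v$ iff $u(x)\le v(x)$ for all $x$, and $u<v$ iff $u\le v$ and $u\neq v$. Let $\mathscr{V}_{>0}=\{u\in\mathscr{V}:0<u\}$ and $\mathscr{V}^s_{>0}=\{\{u\}:u\in\mathscr{V}_{>0}\}$. Let $\mathscr{Q}$ be the set of all finite subsets of $\mathscr{V}$ (including $\emptyset$). For a positive integer $n$, $\mathbb{R}^{n,+}=\{\boldsymbol\lambda\in\mathbb{R}^n:\lambda_j\ge0\ \forall j,\ \sum_j\lambda_j>0\}$, and for $\boldsymbol\lambda\in\mathbb{R}^n$, $\mathbf u=(u_1,\dots,u_n)\in\mathscr{V}^n$, $\boldsymbol\lambda\mathbf u=\sum_{j=1}^n\lambda_ju_j$. A set of desirable option sets is any $K\subseteq\mathscr{Q}$. It is coherent if for all $A,B\in K$: (K0) $A\setminus\{0\}\in K$; (K1) $\{0\}\notin K$; (K2) $\mathscr{V}^s_{>0}\subseteq K$; (K3) $\{\boldsymbol\lambda(\mathbf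 u)\mathbf u:\mathbf u\in A\times B\}\in K$ for every map $\boldsymbol\lambda:A\times B\to\mathbb{R}^{2,+}$; (K4) $A\cup Q\in K$ for all $Q\in\mathscr{Q}$. $\bar{\mathbf K}$ denotes the set of coherent sets of desirable option sets. An assessment is any subset $\mathcal{A}\subseteq\mathscr{Q}$; $\bar{\mathbf K}(\mathcal A)=\{K\in\bar{\mathbf K}:\mathcal A\subseteq K\}$. Two assessments $\mathcal A_1,\mathcal A_2$ are called equivalent if $\bar{\mathbf K}(\mathcal A_1)=\bar{\mathbf K}(\mathcal A_2)$. *)

From HB Require Import structures.
From mathcomp Require Import all_boot all_order all_algebra.
From mathcomp Require Import boolp classical_sets cardinality reals.
Set Implicit Arguments. Unset Strict Implicit. Unset Printing Implicit Defensive.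
Import Order.TTheory GRing.Theory Num.Theory.
Local Open Scope classical_set_scope.
Local Open Scope ring_scope.

Section Defs.
Variables (X : Type) (R : realType).

Definition opt := X -> R.
Definition opt0 : opt := fun _ => 0.
Definition lincomb (a b : R) (u v : opt) : opt := fun x => a * u x + b * v x.
Definition scal (a : R) (u : opt) : opt := fun x => a * u x.

Definition ole (u v : opt) : Prop := forall x, u x <= v x.
Definition olt (u v : opt) : Prop := ole u v /\ u <> v.

Definition Qsets : set (set opt) := [set A | finite_set A].

(* lambda : A x B -> R^{2,+}, given as a (total) map whose values on A x B
   are constrained *)
Definition R2plus (l : R * R) : Prop := 0 <= l.1 /\ 0 <= l.2 /\ 0 < l.1 + l.2.

Definition coherent (K : set (set opt)) : Prop :=
  K `<=` Qsets /\
  (* K0 *) (forall A, K A -> K (A `\ opt0)) /\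
  (* K1 *) ~ K [set opt0] /\
  (* K2 *) (forall u, olt opt0 u -> K [set u]) /\
  (* K3 *) (forall A B, K A -> K B ->
              forall lam : opt -> opt -> R * R,
              (forall u v, A u -> B v -> R2plus (lam u v)) ->
              K [set w | exists u v, A u /\ B v /\
                          w = lincomb (lam u v).1 (lam u v).2 u v]) /\
  (* K4 *) (forall A Q, K A -> Qsets Q -> K (A `|` Q)).

Definition Kbar (As : set (set opt)) : set (set (set opt)) :=
  [set K | coherent K /\ As `<=` K].

Definition equivalent (A1 A2 : set (set opt)) : Prop := Kbar A1 = Kbar A2.

Definition remove_step (A A' : set opt) : Prop :=
  exists u, A u /\
    (exists v mu, A v /\ v <> u /\ 0 <= mu /\ ole u (scal mu v)) /\
    A' = A `\ u.

Inductive removal_steps : set opt -> set opt -> Prop :=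
| rs_refl A : removal_steps A A
| rs_step A A' A'' : remove_step A A' -> removal_steps A' A'' ->
                     removal_steps A A''.
End Defs.

From HB Require Import structures.
From mathcomp Require Import all_boot all_order all_algebra.
From mathcomp Require Import boolp classical_sets cardinality reals.
Import Order.TTheory GRing.Theory Num.Theory.
Local Open Scope ring_scope.
Local Open Scope classical_set_scope.
Set Implicit Arguments. Unset Strict Implicit.

(* The argument has an order-theoretic half and a combinatorial half.
   - Every removal step preserves membership in every coherent set of
     desirable option sets: if u <= c t with c > 0, axiom K3 (combining A
     with the positive singleton {c t - u}, or with A itself when u = c t)
     replaces u by t; taking t = v (when u <= mu v, mu > 0) or t = 0 (when
     u <= 0, followed by K0) removes u.  Conversely B `<=` A and K4 give
     K B -> K A, so removal steps always yield equivalent assessments.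
   - In R^2, among any three distinct options one is dominated by a
     nonnegative multiple of another: either one of them is <= 0, or two of
     them share a positive coordinate and then their ratios are comparable.
   Hence a finite option set can be pruned, one removal step at a time,
   until at most two elements remain; this proves the theorem. *)

Definition removable (X : Type) (R : realType) (A : set (opt X R)) (u : opt X R) :=
  A u /\ exists v mu, A v /\ v <> u /\ 0 <= mu /\ ole u (scal mu v).

Section TwoPoints.
Variables (X : Type) (R : realType) (x y : X).
Hypothesis hxy : forall z, z = x \/ z = y.

(* Two options positive at [x] are comparable up to a nonnegative factor:
   whichever has the smaller ratio [_ y / _ x] is dominated by a multiple
   of the other. *)
Lemma positive_comparable (p q : opt X R) : 0 < p x -> 0 < q x ->
  (exists mu, 0 <= mu /\ ole q (scal mu p)) \/
  (exists mu, 0 <= mu /\ ole p (scal mu q)).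
Proof.
have dominated (a b : opt X R) : 0 < a x -> 0 < b x -> b y * a x <= a y * b x ->
    exists mu, 0 <= mu /\ ole b (scal mu a).
  move=> ax bx hab; exists (b x / a x); split; first by rewrite divr_ge0 // ltW.
  move=> z; rewrite /scal; case: (hxy z) => ->; first by rewrite mulfVK ?gt_eqF.
  by rewrite mulrAC ler_pdivlMr // [b x * _]mulrC.
move=> px qx; case: (leP (q y * p x) (p y * q x)) => hpq; first by left; exact: dominated.
by right; apply: dominated => //; exact: ltW.
Qed.

Lemma positive_pair_removable (S : set (opt X R)) (p q : opt X R) :
  S p -> S q -> p <> q -> 0 < p x -> 0 < q x -> exists u, removable S u.
Proof.
move=> Sp Sq pq px qx; case: (positive_comparable px qx) => [[mu [mu0 h]]|[mu [mu0 h]]].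
  by exists q; split => //; exists p, mu.
by exists p; split => //; exists q, mu; split => //; split => // /esym.
Qed.
End TwoPoints.

Lemma pigeonhole3 (T : Type) (P Q : T -> Prop) (a b c : T) :
  a <> b -> a <> c -> b <> c ->
  P a \/ Q a -> P b \/ Q b -> P c \/ Q c ->
  exists p q, [set a; b; c] p /\ [set a; b; c] q /\ p <> q /\
    ((P p /\ P q) \/ (Q p /\ Q q)).
Proof.
have Sa : [set a; b; c] a by left; left.
have Sb : [set a; b; c] b by left; right.
have Sc : [set a; b; c] c by right.
move=> ab ac bc [ha|ha] [hb|hb] [hc|hc];
  solve [ by exists a, b; auto 6 | by exists a, c; auto 6 | by exists b, c; auto 6 ].
Qed.

Lemma three_options_removable (X : Type) (R : realType) (x y : X)
    (hxy : forall z, z = x \/ z = y) (a b c : opt X R) :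
  a <> b -> a <> c -> b <> c -> exists u, removable [set a; b; c] u.
Proof.
move=> ab ac bc; set S := [set a; b; c].
have Sa : S a by left; left.
have Sb : S b by left; right.
case: (pselect (exists2 p, S p & ole p (@opt0 X R))) => [[p Sp p_le0]|no_nonpos].
  (* a nonpositive option is dominated by 0 times any other element *)
  have [q Sq qp] : exists2 q, S q & q <> p.
    by case: (pselect (a = p)) => [<-|ap]; [exists b => // /esym|exists a].
  exists p; split => //; exists q, 0; split => //; split => //; split => // z.
  by rewrite /scal mul0r; exact: p_le0.
have pos_coord p : S p -> 0 < p x \/ 0 < p y.
  move=> Sp; case: (ltP 0 (p x)) => [|px]; first by left.
  case: (ltP 0 (p y)) => [|py]; first by right.
  by case: no_nonpos; exists p => // z; case: (hxy z) => ->.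
have hyx : forall z, z = y \/ z = x by move=> z; case: (hxy z); auto.
have [p [q [Sp [Sq [pq [[px qx]|[py qy]]]]]]] :=
  pigeonhole3 (P := fun p => 0 < p x) (Q := fun p => 0 < p y)
    ab ac bc (pos_coord a Sa) (pos_coord b Sb) (pos_coord c (or_intror erefl)).
- exact: (positive_pair_removable hxy Sp Sq pq px qx).
- exact: (positive_pair_removable hyx Sp Sq pq py qy).
Qed.

Lemma R2plus_posl (R : realType) (a b : R) : 0 < a -> 0 <= b -> R2plus (a, b).
Proof. by move=> a0 b0; split; [exact: ltW|split => //=; rewrite ltr_wpDr]. Qed.

Lemma lincomb_1_0 (X : Type) (R : realType) (u v : opt X R) : lincomb 1 0 u v = u.
Proof. by apply: funext => z; rewrite /lincomb mul1r mul0r addr0. Qed.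

Section CoherentRemoval.
Variables (X : Type) (R : realType) (K : set (set (opt X R))).
Hypothesis cK : coherent K.

Lemma coherent_finite (A : set (opt X R)) : K A -> Qsets A.
Proof. by case: cK => sub _; exact: sub. Qed.

Lemma coherent_superset (S T : set (opt X R)) : K S -> S `<=` T -> Qsets T -> K T.
Proof.
move: cK => [_ [_ [_ [_ [_ K4]]]]] KS ST QT.
by rewrite -(setUidr ST); apply: K4.
Qed.

Lemma coherent_combine (A D T : set (opt X R)) (lam : opt X R -> opt X R -> R * R) :
  K A -> K D -> (forall u v, A u -> D v -> R2plus (lam u v)) ->
  (forall u v, A u -> D v -> T (lincomb (lam u v).1 (lam u v).2 u v)) ->
  Qsets T -> K T.
Proof.
move=> KA KD hlam hT QT; move: (cK) => [_ [_ [_ [_ [K3 _]]]]].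
apply: coherent_superset (K3 _ _ KA KD lam hlam) _ QT.
by move=> w [u [v [Au [Dv ->]]]]; apply: hT.
Qed.

Lemma coherent_replace (A : set (opt X R)) (u t : opt X R) (c : R) :
  K A -> A u -> 0 < c -> ole u (scal c t) -> K ((A `\ u) `|` [set t]).
Proof.
move=> KA Au c0 hut.
have QT : Qsets ((A `\ u) `|` [set t]).
  by rewrite /Qsets /= finite_setU; split; [apply/finite_setD/coherent_finite|exact: finite_set1].
have keep w e : A w -> w <> u -> ((A `\ u) `|` [set t]) (lincomb 1 0 w e).
  by rewrite lincomb_1_0 => Aw wu; left.
have ci0 : 0 < c^-1 by rewrite invr_gt0.
case: (pselect (u = scal c t)) => [uE|uE].
  (* u = c t itself: rescale u by 1/c *)
  apply: (coherent_combine (D := A)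
    (lam := fun w _ => if `[< w = u >] then (c^-1, 0) else (1, 0)) KA KA _ _ QT).
    by move=> w e _ _; case: asboolP => _; apply: R2plus_posl.
  move=> w e Aw _; case: asboolP => [wu|]; last exact: keep.
  right; apply: funext => z.
  by rewrite /lincomb wu uE /scal mul0r addr0 mulrA mulVf ?gt_eqF // mul1r.
(* otherwise the gap d = c t - u is positive, and (u + d) / c = t *)
set d : opt X R := fun z => c * t z - u z.
have Kd : K [set d].
  move: cK => [_ [_ [_ [K2 _]]]]; apply: K2; split.
    by move=> z; rewrite /d /opt0 subr_ge0; exact: hut.
  move=> d0; apply: uE; apply: funext => z.
  by have := congr1 (fun f => f z) d0; rewrite /d /opt0 /scal => /esym/eqP; rewrite subr_eq0 => /eqP.
apply: (coherent_combine (D := [set d])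
  (lam := fun w _ => if `[< w = u >] then (c^-1, c^-1) else (1, 0))) KA Kd _ _ QT.
  by move=> w e _ _; case: asboolP => _; apply: R2plus_posl => //; exact: ltW.
move=> w e Aw ->; case: asboolP => [wu|]; last exact: keep.
right; apply: funext => z.
by rewrite /lincomb /d wu -mulrDr addrCA subrr addr0 mulrA mulVf ?gt_eqF // mul1r.
Qed.

(* A removal step preserves membership in K: replace u by v (if u <= mu v
   with mu > 0), or by 0 (if u <= 0) and discard 0 with K0. *)
Lemma coherent_remove (A : set (opt X R)) (u : opt X R) :
  K A -> removable A u -> K (A `\ u).
Proof.
move=> KA [Au [v [mu [Av [vu [mu0 hle]]]]]].
have QA : Qsets (A `\ u) by apply/finite_setD/coherent_finite.
have [mu_eq0|mu_neq0] := eqVneq mu 0.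
  have u_le0 : ole u (scal 1 (@opt0 X R)).
    by move=> z; have := hle z; rewrite /scal mu_eq0 !mul0r mulr0.
  move: cK => [_ [K0 _]].
  apply: coherent_superset (K0 _ (coherent_replace KA Au ltr01 u_le0)) _ QA.
  by move=> w [[]].
have mu_gt0 : 0 < mu by rewrite lt0r mu_neq0.
rewrite -(setUidl (A := A `\ u) (B := [set v])); first exact: coherent_replace hle.
by move=> w ->; split.
Qed.

Lemma coherent_removal_steps (A B : set (opt X R)) :
  removal_steps A B -> K A -> K B.
Proof.
elim=> {A B} [//|A A' A'' [u [Au [hu ->]]] _ IH KA].
by apply/IH/coherent_remove.
Qed.
End CoherentRemoval.

Lemma removal_steps_sub (X : Type) (R : realType) (A B : set (opt X R)) :
  removal_steps A B -> B `<=` A.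
Proof.
elim=> {A B} [A|A A' A'' [u [_ [_ ->]]] _ IH]; first exact: subset_refl.
by move=> w /IH [].
Qed.

Lemma removal_steps_equivalent (X : Type) (R : realType) (A B : set (opt X R)) :
  Qsets A -> removal_steps A B -> equivalent [set A] [set B].
Proof.
move=> QA st; apply/seteqP; split => K [cK sub]; split => // _ ->.
  exact: (coherent_removal_steps cK st (sub A erefl)).
exact: (coherent_superset cK (sub B erefl) (removal_steps_sub st) QA).
Qed.

Lemma removable_subset (X : Type) (R : realType) (S T : set (opt X R)) (u : opt X R) :
  S `<=` T -> removable S u -> removable T u.
Proof.
move=> ST [Su [v [mu [Sv hv]]]].
by split; [exact: ST|exists v, mu; split; [exact: ST|]].
Qed.

Lemma set_seq_rem (T : eqType) (s : seq T) (u : T) :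
  uniq s -> [set` s] `\ u = [set` rem u s].
Proof.
move=> us; apply/seteqP; split => w /=; rewrite (mem_rem_uniq _ us) inE.
  by move=> [ws /eqP wu]; apply/andP.
by move=> /andP[/eqP wu ws].
Qed.

Lemma set_seq_size2 (T : eqType) (x0 : T) (s : seq T) :
  (size s <= 2)%N -> exists u v : T, [set` s] `<=` [set u; v].
Proof.
case: s => [|a [|b [|? ?]]] // _.
- by exists x0, x0.
- by exists a, a => w /=; rewrite inE => /eqP ->; left.
- by exists a, b => w /=; rewrite !inE => /orP[] /eqP ->; [left|right].
Qed.

Lemma prune_to_two (X : Type) (R : realType) (x y : X)
    (hxy : forall z, z = x \/ z = y) (n : nat) (s : seq (opt X R)) :
  uniq s -> (size s <= n)%N ->
  exists B, (exists u v, B `<=` [set u; v]) /\ removal_steps [set` s] B.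
Proof.
elim: n s => [|n IH] s us hs; have [hs2|hs3] := leqP (size s) 2.
1,3: by exists [set` s]; split; [exact: (set_seq_size2 (@opt0 X R) hs2)|exact: rs_refl].
  by have := leq_trans hs3 hs.
case: s us hs hs3 => [|a [|b [|c t]]] // us hs _.
set s := [:: a, b, c & t] in us hs *.
have ab : a <> b by move=> E; move: us; rewrite /s E cons_uniq in_cons eqxx.
have ac : a <> c by move=> E; move: us; rewrite /s E cons_uniq !in_cons eqxx orbT.
have bc : b <> c.
  by move=> E; move: us; rewrite /s E cons_uniq => /andP[_]; rewrite cons_uniq in_cons eqxx.
have [u hu] := three_options_removable hxy ab ac bc.
have [u_in_s hv] : removable [set` s] u.
  by apply: removable_subset hu => w [[]|] -> /=; rewrite /s !inE eqxx ?orbT.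
have us_rem : uniq (rem u s) by exact: rem_uniq.
have size_rem_n : (size (rem u s) <= n)%N by rewrite size_rem.
have [B [hB st]] := IH _ us_rem size_rem_n.
exists B; split => //; apply: rs_step st.
by exists u; split => //; split => //; rewrite set_seq_rem.
Qed.

Lemma card2_cover (X : finType) : #|X| = 2%N -> exists x y : X, forall z, z = x \/ z = y.
Proof.
move=> hX; have := mem_enum X; have := cardT X; rewrite hX.
case: (enum X) => [|x [|y [|? ?]]] //= _ mem; exists x, y => z.
by have := mem z; rewrite !inE => /orP[] /eqP ->; [left|right].
Qed.

Theorem proposition5 (X : finType) (R : realType) (hX : #|X| = 2%N)
  (A : set (opt X R)) :
  Qsets A ->
  exists B : set (opt X R),
    B `<=` A /\
    (exists u v : opt X R, B `<=` [set u; v]) /\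
    equivalent [set A] [set B] /\
    removal_steps A B.
Proof.
move=> QA; have [x [y hxy]] := card2_cover hX.
have [s As] : exists s : seq (opt X R), A = [set` s] by apply/finite_seqP.
have A_undup : A = [set` undup s].
  by rewrite As; apply/seteqP; split => w /=; rewrite mem_undup.
have [B [hB st]] := prune_to_two (R := R) hxy (undup_uniq s) (leqnn _).
rewrite -A_undup in st.
exists B; split; first exact: removal_steps_sub st.
by split => //; split => //; exact: removal_steps_equivalent.
Qed.
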